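(* Suppose Assumptions A1, A3 and A4 hold. Let $\{w_k\}$ be generated by $w_{k+1}=w_k+p_k$, where $|S_k|=\beta$ and $p_k$ is any vector satisfying the residual condition $$\|\nabla^2R_{S_k}(w_k)p_k+\nabla R(w_k)\|\le\zeta\|\nabla R(w_k)\|$$ for a parameter $\zeta<1$. Then $$\mathbb{E}_k[\|w_{k+1}-w^*\|]\le\frac{M}{2\mu_\beta}\|w_k-w^*\|^2+\left(\frac{\sigma}{\mu_\beta\sqrt\beta}+\frac{L\zeta}{\mu_\beta}\right)\|w_k-w^*\|.$$ Consequently, if in addition Assumption B1 holds, $\beta\ge 64\sigma^2/\bar\mu^2$, $\zeta\le\frac{\mu_\beta}{8L}$, and $\|w_0-w^*\|\le\min\{\frac1{4C_1},\frac1{4\gamma C_1}\}$ with $C_1=\frac M{2\mu_\beta}$, then $\mathbb{E}[\|w_{k+1}-w^*\|]\le\frac12\mathbb{E}[\|w_k-w^*\|]$ for all $k\ge0$.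
   Context: Setting (finite sum): $R(w)=\frac1N\sum_{i=1}^NF_i(w)$ for $w\in\mathbb{R}^d$, each $F_i$ twice continuously differentiable. For an index multiset $S$, $\nabla^2R_S(w)=\frac1{|S|}\sum_{i\in S}\nabla^2F_i(w)$. At each iteration $S_k$ consists of $\beta$ indices drawn independently and uniformly from $\{1,\dots,N\}$, independent of the past; the full gradient $\nabla R(w_k)$ is used. $\mathbb{E}_k$ is expectation over $S_k$ conditional on $w_k$. $w^*$ is the unique minimizer of $R$. Assumption A1 (for $R$): for every positive integer $\beta$ there are $0<\mu_\beta\le L_\beta$ with $\mu_\beta I\preceq\nabla^2R_S(w)\preceq L_\beta I$ for all $w$ and all $|S|=\beta$; constants $0<\bar\mu\le\mu_\beta$, $L_\beta\le\bar L<\infty$; and $\mu I\preceq\nabla^2R(w)\preceq LI$ for all $w$. Assumption A3: $\|\nabla^2R(w)-\nabla^2R(z)\|\le M\|w-z\|$ for all $w,z$. Assumption A4: with $i$ uniform on $\{1,\dots,N\}$, $\|\mathbb{E}[(\nabla^2F_i(w)-\nabla^2R(w))^2]\|\le\sigma^2$ for all $w$. Assumption B1: there is $\gamma>0$ such that every iterate satisfies $\mathbb{E}[\|w_k-w^*\|^2]\le\gamma(\mathbb{E}[\|w_k-w^*\|])^2$. *)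

From Stdlib Require Import Reals.
From mathcomp Require Import all_boot.

Set Implicit Arguments.
Unset Strict Implicit.
Unset Printing Implicit Defensive.

Local Open Scope R_scope.

Definition vec (d : nat) := 'I_d -> R.
Definition mat (d : nat) := 'I_d -> 'I_d -> R.

Definition rsum (n : nat) (f : 'I_n -> R) : R := \big[Rplus/0]_(i < n) f i.

Definition vadd d (u v : vec d) : vec d := fun i => u i + v i.
Definition vsub d (u v : vec d) : vec d := fun i => u i - v i.
Definition dot d (u v : vec d) : R := rsum (fun i => u i * v i).
Definition vnorm d (v : vec d) : R := sqrt (dot v v).

Definition mv d (A : mat d) (v : vec d) : vec d :=
  fun i => rsum (fun j => A i j * v j).
Definition mmul d (A B : mat d) : mat d :=
  fun i k => rsum (fun j => A i j * B j k).
Definition msub d (A B : mat d) : mat d := fun i j => A i j - B i j.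

Definition opnorm_le d (A : mat d) (c : R) : Prop :=
  forall x : vec d, vnorm (mv A x) <= c * vnorm x.

Definition loewner_between d (m L : R) (A : mat d) : Prop :=
  forall x : vec d, m * dot x x <= dot x (mv A x) <= L * dot x x.

Definition has_gradient d (f : vec d -> R) (g : vec d -> vec d) : Prop :=
  forall (w : vec d) (eps : R), 0 < eps -> exists delta, 0 < delta /\
    forall h : vec d, vnorm h < delta ->
      Rabs (f (vadd w h) - f w - dot (g w) h) <= eps * vnorm h.

Definition has_jacobian d (g : vec d -> vec d) (H : vec d -> mat d) : Prop :=
  forall (w : vec d) (eps : R), 0 < eps -> exists delta, 0 < delta /\
    forall h : vec d, vnorm h < delta ->
      vnorm (vsub (vsub (g (vadd w h)) (g w)) (mv (H w) h)) <= eps * vnorm h.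

Definition mat_continuous d (H : vec d -> mat d) : Prop :=
  forall (w : vec d) (eps : R), 0 < eps -> exists delta, 0 < delta /\
    forall z : vec d, vnorm (vsub z w) < delta ->
      forall i j, Rabs (H z i j - H w i j) < eps.

Definition is_C2 d (f : vec d -> R) (g : vec d -> vec d) (H : vec d -> mat d)
  : Prop := has_gradient f g /\ has_jacobian g H /\ mat_continuous H.

Definition avgN (N : nat) (f : 'I_N -> R) : R := / INR N * rsum f.

Definition Robj N d (F : 'I_N -> vec d -> R) (w : vec d) : R :=
  avgN (fun i => F i w).
Definition gradR N d (gF : 'I_N -> vec d -> vec d) (w : vec d) : vec d :=
  fun a => avgN (fun i => gF i w a).
Definition hessR N d (HF : 'I_N -> vec d -> mat d) (w : vec d) : mat d :=
  fun a b => avgN (fun i => HF i w a b).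

Definition hessS N d beta (HF : 'I_N -> vec d -> mat d)
  (S : beta.-tuple 'I_N) (w : vec d) : mat d :=
  fun a b => / INR beta * rsum (fun j : 'I_beta => HF (tnth S j) w a b).

Definition hess_var N d (HF : 'I_N -> vec d -> mat d) (w : vec d) : mat d :=
  fun a b => avgN (fun i =>
    mmul (msub (HF i w) (hessR HF w)) (msub (HF i w) (hessR HF w)) a b).

(* Expectation over S = beta indices drawn i.i.d. uniformly from 'I_N *)
Definition sample_exp N beta (X : beta.-tuple 'I_N -> R) : R :=
  / (INR N ^ beta) * \big[Rplus/0]_(S : beta.-tuple 'I_N) X S.

(* Sample histories are stored most-recent-first: S_{k-1} :: ... :: S_0.
   The step p_k may depend on the whole past history and on S_k. *)
Fixpoint iterate N d beta (w0 : vec d)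
  (p : seq (beta.-tuple 'I_N) -> beta.-tuple 'I_N -> vec d)
  (h : seq (beta.-tuple 'I_N)) : vec d :=
  match h with
  | [::] => w0
  | Sk :: h1 => vadd (iterate w0 p h1) (p h1 Sk)
  end.

(* Total expectation of X(S_{k-1},...,S_0) over the i.i.d. samples S_0..S_{k-1} *)
Fixpoint full_exp N beta (k : nat) (X : seq (beta.-tuple 'I_N) -> R) : R :=
  match k with
  | O => X [::]
  | k'.+1 => full_exp k' (fun h => sample_exp (fun S => X (S :: h)))
  end.

(* Write e = w - w*, H = hess R(w) and H_S = hess R_S(w).  As grad R(w* ) = 0,
     H_S (e + p) = (H_S - H) e + (H e - grad R(w)) + (H_S p + grad R(w)),
   and mu_beta |e + p| is bounded by the three norms on the right: the sampling error of
   the Hessian, whose mean is at most sigma |e| / sqrt beta because the beta sampled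
   Hessians are independent with variance sigma^2 (cross terms vanish); the Taylor
   remainder M |e|^2 / 2 of the gradient (Lipschitz Hessian); and the residual
   zeta |grad R(w)| <= zeta L |e|.  Taking full expectations and using B1 turns this into
   e_(k+1) <= C1 gamma e_k^2 + C2 e_k with C2 <= 1/4, and 4 gamma C1 e_0 <= 1 keeps e_k <= e_0,
   so every step halves e_k.  The Loewner bounds become operator-norm bounds because the
   Hessians are symmetric (Schwarz's theorem). *)

From Stdlib Require Import Reals Lra FunctionalExtensionality.
From mathcomp Require Import all_boot all_algebra Rstruct.
Import GRing.Theory Num.Theory.
Set Implicit Arguments.
Unset Strict Implicit.
Local Open Scope R_scope.

Section FiniteSums.
Variable n : nat.
Implicit Types f g : 'I_n -> R.

Lemma rsum_ext f g : (forall i, f i = g i) -> rsum f = rsum g.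
Proof. by move=> fg; apply: eq_bigr => i _; exact: fg. Qed.

Lemma rsumD f g : rsum (fun i => f i + g i) = rsum f + rsum g.
Proof. exact: big_split. Qed.

Lemma rsumZ c f : rsum (fun i => c * f i) = c * rsum f.
Proof. by rewrite /rsum -mulr_sumr. Qed.

Lemma rsumZr c f : rsum (fun i => f i * c) = rsum f * c.
Proof. by rewrite Rmult_comm -rsumZ; apply: rsum_ext => i; ring. Qed.

Lemma rsumB f g : rsum (fun i => f i - g i) = rsum f - rsum g.
Proof.
rewrite -(rsum_ext (f := fun i => f i + -1 * g i)); last by move=> i; ring.
by rewrite rsumD rsumZ; ring.
Qed.

Lemma rsum_const c : rsum (fun _ : 'I_n => c) = INR n * c.
Proof.
rewrite /rsum big_const_ord; elim: n => [|m IH]; first by rewrite /=; ring.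
by rewrite iterS IH S_INR; ring.
Qed.

Lemma rsum_le f g : (forall i, f i <= g i) -> rsum f <= rsum g.
Proof. by move=> fg; apply/RleP; apply: ler_sum => i _; apply/RleP. Qed.

Lemma rsum_ge0 f : (forall i, 0 <= f i) -> 0 <= rsum f.
Proof.
move=> f0; rewrite -(Rmult_0_r (INR n)) -rsum_const; exact: rsum_le.
Qed.

Lemma rsum_ge0_eq0 f : (forall i, 0 <= f i) -> rsum f = 0 -> forall i, f i = 0.
Proof. by move=> f0 /psumr_eq0P f_eq0 i; apply: f_eq0 => // j _; apply/RleP. Qed.

Lemma rsum_delta f a : rsum (fun i => f i * (if i == a then 1 else 0)) = f a.
Proof.
rewrite /rsum (bigD1 a) //= eqxx big1 => [|i /negbTE ->]; last by rewrite Rmult_0_r.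
by rewrite Rmult_1_r; apply: Rplus_0_r.
Qed.

End FiniteSums.

Lemma rsum_exchange n m (f : 'I_n -> 'I_m -> R) :
  rsum (fun i => rsum (f i)) = rsum (fun j => rsum (fun i => f i j)).
Proof. exact: exchange_big. Qed.

Definition scal d (c : R) (v : vec d) : vec d := fun i => c * v i.
Definition vzero {d : nat} : vec d := fun _ => 0.

Section Vectors.
Variable d : nat.
Implicit Types u v w : vec d.

Lemma dotC u v : dot u v = dot v u.
Proof. by apply: rsum_ext => i; ring. Qed.

Lemma dotDl u v w : dot (vadd u v) w = dot u w + dot v w.
Proof. by rewrite /dot -rsumD; apply: rsum_ext => i; rewrite /vadd; ring. Qed.

Lemma dotDr u v w : dot w (vadd u v) = dot w u + dot w v.
Proof. by rewrite dotC dotDl !(dotC w). Qed.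

Lemma dotBr u v w : dot w (vsub u v) = dot w u - dot w v.
Proof. by rewrite /dot -rsumB; apply: rsum_ext => i; rewrite /vsub; ring. Qed.

Lemma dotZl c u w : dot (scal c u) w = c * dot u w.
Proof. by rewrite /dot -rsumZ; apply: rsum_ext => i; rewrite /scal; ring. Qed.

Lemma dotZr c u w : dot w (scal c u) = c * dot w u.
Proof. by rewrite dotC dotZl dotC. Qed.

Lemma dot_ge0 v : 0 <= dot v v.
Proof. by apply: rsum_ge0 => i; apply: Rle_0_sqr. Qed.

Lemma dot_eq0 v : dot v v = 0 -> v = vzero.
Proof.
move=> /(rsum_ge0_eq0 (fun i => Rle_0_sqr (v i))) v0.
by apply: functional_extensionality => i; apply: Rsqr_0_uniq; exact: v0.
Qed.

Lemma vnorm_ge0 v : 0 <= vnorm v.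
Proof. exact: sqrt_pos. Qed.

Lemma vnorm_sqr v : vnorm v * vnorm v = dot v v.
Proof. by rewrite /vnorm sqrt_sqrt //; exact: dot_ge0. Qed.

Lemma vnorm_le_sqr v c : 0 <= c -> dot v v <= c * c -> vnorm v <= c.
Proof. by move=> c0 vc; rewrite -(sqrt_square c) //; apply: sqrt_le_1_alt. Qed.

Lemma quadratic_ge0_discr a b c : 0 <= c ->
  (forall t, 0 <= a + 2 * b * t + c * (t * t)) -> b * b <= a * c.
Proof.
move=> c0 q0; case: (Rle_lt_or_eq_dec 0 c c0) => [c_gt0|c_eq0].
  have := q0 (- b / c); have -> : a + 2 * b * (- b / c) + c * (- b / c * (- b / c))
    = (a * c - b * b) / c by field; lra.
  by move=> /(Rmult_le_compat_r c _ _ c0); rewrite /Rdiv Rmult_assoc Rinv_l; lra.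
rewrite -c_eq0 in q0 *; case: (Req_dec b 0) => [->|b0]; first lra.
have := q0 (- (Rabs a + 1) / (2 * b)).
have -> : a + 2 * b * (- (Rabs a + 1) / (2 * b)) + 0 * (- (Rabs a + 1) / (2 * b) *
  (- (Rabs a + 1) / (2 * b))) = a - (Rabs a + 1) by field.
have := Rle_abs a; lra.
Qed.

Lemma cauchy_schwarz u v : Rabs (dot u v) <= vnorm u * vnorm v.
Proof.
have cs : dot u v * dot u v <= dot u u * dot v v.
  apply: quadratic_ge0_discr; first exact: dot_ge0.
  move=> t; have := dot_ge0 (vadd u (scal t v)).
  by rewrite dotDl !dotDr !dotZl !dotZr (dotC v u); lra.
rewrite -sqrt_Rsqr_abs /vnorm -sqrt_mult; try exact: dot_ge0.
exact: sqrt_le_1_alt.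
Qed.

Lemma dot_le_vnorm u v : dot u v <= vnorm u * vnorm v.
Proof. exact: Rle_trans (Rle_abs _) (cauchy_schwarz u v). Qed.

Lemma vnorm_le_of_dot u c : 0 <= c -> dot u u <= vnorm u * c -> vnorm u <= c.
Proof.
rewrite -vnorm_sqr; have := vnorm_ge0 u.
case: (Req_dec (vnorm u) 0) => [-> | u0] *; first lra.
by apply: (Rmult_le_reg_l (vnorm u)); lra.
Qed.

Lemma vnormD u v : vnorm (vadd u v) <= vnorm u + vnorm v.
Proof.
apply: vnorm_le_sqr; first by have := vnorm_ge0 u; have := vnorm_ge0 v; lra.
rewrite dotDl !dotDr (dotC v u) -(vnorm_sqr u) -(vnorm_sqr v).
by have := dot_le_vnorm u v; lra.
Qed.

Lemma vnorm_vsubC u v : vnorm (vsub u v) = vnorm (vsub v u).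
Proof. by rewrite /vnorm /dot; congr sqrt; apply: rsum_ext => i; rewrite /vsub; ring. Qed.

Lemma vsub0 v : vsub v vzero = v.
Proof. by apply: functional_extensionality => i; rewrite /vsub /vzero; ring. Qed.

Lemma vnormZ c v : vnorm (scal c v) = Rabs c * vnorm v.
Proof.
rewrite /vnorm dotZl dotZr -Rmult_assoc sqrt_mult ?sqrt_Rsqr_abs //.
  exact: Rle_0_sqr.
exact: dot_ge0.
Qed.

End Vectors.

Section Matrices.
Variable d : nat.
Implicit Types u v x : vec d.
Implicit Types A B : mat d.

Lemma mvD A u v : mv A (vadd u v) = vadd (mv A u) (mv A v).
Proof.
by apply: functional_extensionality => i; rewrite /mv /vadd -rsumD; apply: rsum_ext => j; ring.
Qed.

Lemma mvZ A c u : mv A (scal c u) = scal c (mv A u).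
Proof.
by apply: functional_extensionality => i; rewrite /mv /scal -rsumZ; apply: rsum_ext => j; ring.
Qed.

Lemma mv_msub A B u : mv (msub A B) u = vsub (mv A u) (mv B u).
Proof.
apply: functional_extensionality => i.
by rewrite /mv /vsub /msub -rsumB; apply: rsum_ext => j; ring.
Qed.

Lemma mv_mmul A B v : mv (mmul A B) v = mv A (mv B v).
Proof.
apply: functional_extensionality => i; rewrite /mv /mmul.
under [LHS]rsum_ext => k do rewrite -rsumZr.
rewrite rsum_exchange; apply: rsum_ext => j; rewrite -rsumZ.
by apply: rsum_ext => k; ring.
Qed.

Definition msym A := forall i j, A i j = A j i.

Lemma dot_mv_sym A u v : msym A -> dot u (mv A v) = dot v (mv A u).
Proof.
move=> symA; rewrite /dot /mv.
under [LHS]rsum_ext => i do rewrite -rsumZ.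
under [RHS]rsum_ext => i do rewrite -rsumZ.
by rewrite rsum_exchange; apply: rsum_ext => i; apply: rsum_ext => j; rewrite symA; ring.
Qed.

Section PositiveSemidefinite.
Variable A : mat d.
Hypothesis symA : msym A.
Hypothesis psdA : forall x, 0 <= dot x (mv A x).

Lemma psd_cauchy_schwarz u v :
  dot u (mv A v) * dot u (mv A v) <= dot u (mv A u) * dot v (mv A v).
Proof.
apply: quadratic_ge0_discr => [|t]; first exact: psdA.
have := psdA (vadd u (scal t v)).
by rewrite mvD mvZ dotDl !dotDr !dotZl !dotZr (dot_mv_sym u v symA); lra.
Qed.

(* Cauchy-Schwarz for the form of A with u := A x gives
   |Ax|^4 <= (Ax)'A(Ax) x'Ax <= L^2 |Ax|^2 |x|^2. *)
Lemma psd_opnorm_le L : 0 <= L -> (forall x, dot x (mv A x) <= L * dot x x) ->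
  forall x, vnorm (mv A x) <= L * vnorm x.
Proof.
move=> L0 AleL x; set y := mv A x.
have yy0 := dot_ge0 y; have xx0 := dot_ge0 x.
have yyyy : dot y y * dot y y <= (L * dot y y) * (L * dot x x).
  apply: Rle_trans (psd_cauchy_schwarz y x) _.
  by apply: Rmult_le_compat; [exact: psdA | exact: psdA | exact: AleL | exact: AleL].
apply: vnorm_le_sqr; first by have := vnorm_ge0 x; nra.
have -> : L * vnorm x * (L * vnorm x) = L * L * dot x x by rewrite -vnorm_sqr; ring.
case: (Req_dec (dot y y) 0) => [-> | y0]; first by nra.
by apply: (Rmult_le_reg_l (dot y y)); nra.
Qed.

End PositiveSemidefinite.

Lemma msymB A B : msym A -> msym B -> msym (msub A B).
Proof. by move=> symA symB i j; rewrite /msub symA symB. Qed.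

Lemma msym_avg N (A : 'I_N -> mat d) :
  (forall i, msym (A i)) -> msym (fun a c => avgN (fun i => A i a c)).
Proof. by move=> symA a c; rewrite /avgN; congr (_ * _); apply: rsum_ext => i; apply: symA. Qed.

Lemma loewner_lower_vnorm A m x : (forall x, m * dot x x <= dot x (mv A x)) ->
  m * vnorm x <= vnorm (mv A x).
Proof.
move=> mleA; have := mleA x; have := dot_le_vnorm x (mv A x).
rewrite -vnorm_sqr; have := vnorm_ge0 x; have := vnorm_ge0 (mv A x).
case: (Req_dec (vnorm x) 0) => [-> | x0]; first lra.
by move=> *; apply: (Rmult_le_reg_l (vnorm x)); nra.
Qed.

Lemma mv_wsum n k (A : 'I_n -> mat d) v :
  mv (fun a c => k * rsum (fun i => A i a c)) v = fun a => k * rsum (fun i => mv (A i) v a).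
Proof.
apply: functional_extensionality => a; rewrite /mv.
under [LHS]rsum_ext => j do rewrite Rmult_assoc -rsumZr -rsumZ.
rewrite rsum_exchange -rsumZ; apply: rsum_ext => i; rewrite -rsumZ.
by apply: rsum_ext => j; ring.
Qed.

Lemma mv_avg N (A : 'I_N -> mat d) v :
  mv (fun a c => avgN (fun i => A i a c)) v = fun a => avgN (fun i => mv (A i) v a).
Proof. exact: mv_wsum. Qed.

Lemma dot_avg N u (X : 'I_N -> vec d) :
  dot u (fun a => avgN (fun i => X i a)) = avgN (fun i => dot u (X i)).
Proof.
rewrite /dot /avgN; under [LHS]rsum_ext => a do rewrite -2!rsumZ.
rewrite rsum_exchange -rsumZ; apply: rsum_ext => i; rewrite -rsumZ.
by apply: rsum_ext => a; ring.
Qed.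

End Matrices.

Lemma derivable_pt_lim_of_remainder (f : R -> R) x l :
  (forall eps, 0 < eps -> exists delta, 0 < delta /\ forall h, Rabs h < delta ->
     Rabs (f (x + h) - f x - h * l) <= eps * Rabs h) ->
  derivable_pt_lim f x l.
Proof.
move=> rem eps eps0; have [delta [delta0 fh]] := rem (eps / 2) ltac:(lra).
exists (mkposreal delta delta0) => h h0 /= hdelta.
have habs : 0 < Rabs h by apply: Rabs_pos_lt.
have -> : (f (x + h) - f x) / h - l = (f (x + h) - f x - h * l) / h by field.
rewrite /Rdiv Rabs_mult Rabs_inv; have := fh h hdelta.
move=> /(Rmult_le_compat_r (/ Rabs h) _ _ (Rlt_le _ _ (Rinv_0_lt_compat _ habs))).
by rewrite (Rmult_assoc _ (Rabs h)) Rinv_r; lra.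
Qed.

Lemma derivable_pt_lim_rsum n (f : 'I_n -> R -> R) (l : 'I_n -> R) x :
  (forall i, derivable_pt_lim (f i) x (l i)) ->
  derivable_pt_lim (fun s => rsum (fun i => f i s)) x (rsum l).
Proof.
elim: n f l => [|n IH] f l fl.
  apply: (derivable_pt_lim_ext (fct_cte 0)) => [t|]; first by rewrite /rsum big_ord0.
  by rewrite /rsum big_ord0; exact: derivable_pt_lim_const.
rewrite /rsum big_ord_recr /=.
apply: (derivable_pt_lim_ext (fun s => rsum (fun i : 'I_n => f (widen_ord (leqnSn n) i) s)
  + f ord_max s)) => [t|]; first by rewrite /rsum big_ord_recr.
exact: derivable_pt_lim_plus (IH _ _ (fun i => fl _)) (fl _).
Qed.

Lemma derivable_pt_lim_min_eq0 (f : R -> R) x l :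
  derivable_pt_lim f x l -> (forall y, f x <= f y) -> l = 0.
Proof.
move=> fl fmin; have pr : derivable_pt f x := exist _ l fl.
rewrite -(derive_pt_eq_0 _ _ _ pr fl).
by apply: (deriv_minimum f (x - 1) (x + 1)) => *; [lra | lra | exact: fmin].
Qed.

Lemma increment_le_of_deriv (f f' : R -> R) B :
  (forall c, 0 <= c <= 1 -> derivable_pt_lim f c (f' c)) ->
  (forall c, 0 <= c <= 1 -> f' c <= B) -> f 1 - f 0 <= B.
Proof.
move=> fd f'B; have [c [-> c01]] := MVT_cor2 f f' 0 1 Rlt_0_1 fd.
by have := f'B c ltac:(lra); lra.
Qed.

Lemma increment_ge_of_deriv (f f' : R -> R) B :
  (forall c, 0 <= c <= 1 -> derivable_pt_lim f c (f' c)) ->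
  (forall c, 0 <= c <= 1 -> B <= f' c) -> B <= f 1 - f 0.
Proof.
move=> fd f'B; have [c [-> c01]] := MVT_cor2 f f' 0 1 Rlt_0_1 fd.
by have := f'B c ltac:(lra); lra.
Qed.

Lemma div_add1_le1 a : 0 <= a -> a / (a + 1) <= 1.
Proof.
by move=> a0; apply: (Rmult_le_reg_r (a + 1)); [lra | rewrite /Rdiv Rmult_assoc Rinv_l; lra].
Qed.

Definition line d (w v : vec d) (s : R) : vec d := vadd w (scal s v).

Definition line_gradient d (f : vec d -> R) (g : vec d -> vec d) : Prop :=
  forall w v s, derivable_pt_lim (fun t => f (line w v t)) s (dot (g (line w v s)) v).

Definition line_jacobian d (g : vec d -> vec d) (H : vec d -> mat d) : Prop :=
  forall u w v s,
    derivable_pt_lim (fun t => dot u (g (line w v t))) s (dot u (mv (H (line w v s)) v)).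

Section Lines.
Variable d : nat.
Implicit Types u v w z : vec d.

Lemma line_shift w v s h : line w v (s + h) = vadd (line w v s) (scal h v).
Proof. by apply: functional_extensionality => i; rewrite /line /vadd /scal; ring. Qed.

Lemma line0 w v : line w v 0 = w.
Proof. by apply: functional_extensionality => i; rewrite /line /vadd /scal; ring. Qed.

Lemma line1 w z : line w (vsub z w) 1 = z.
Proof. by apply: functional_extensionality => i; rewrite /line /vadd /scal /vsub; ring. Qed.

Lemma line_vsub w z t : vsub (line w (vsub z w) t) z = scal (t - 1) (vsub z w).
Proof. by apply: functional_extensionality => i; rewrite /line /vadd /scal /vsub; ring. Qed.

Lemma line_deriv_of_remainder (phi : vec d -> R) (dphi : vec d -> vec d -> R) w v s :
  (forall z eps, 0 < eps -> exists delta, 0 < delta /\ forall h, vnorm h < delta ->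
     Rabs (phi (vadd z h) - phi z - dphi z h) <= eps * vnorm h) ->
  (forall z t, dphi z (scal t v) = t * dphi z v) ->
  derivable_pt_lim (fun t => phi (line w v t)) s (dphi (line w v s) v).
Proof.
move=> rem dphiZ; apply: derivable_pt_lim_of_remainder => eps eps0.
set z := line w v s; have v0 := vnorm_ge0 v.
have [delta [delta0 phih]] := rem z (eps / (vnorm v + 1)) ltac:(apply: Rdiv_lt_0_compat; lra).
exists (delta / (vnorm v + 1)); split; first by apply: Rdiv_lt_0_compat; lra.
move=> h hdelta; rewrite line_shift -/z -dphiZ.
have hv : Rabs h * (vnorm v + 1) < delta.
  move: hdelta => /(Rmult_lt_compat_r (vnorm v + 1) _ _ ltac:(lra)).
  by rewrite /Rdiv Rmult_assoc Rinv_l; lra.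
have h0 := Rabs_pos h.
have hvdelta : vnorm (scal h v) < delta by rewrite vnormZ; nra.
apply: Rle_trans (phih _ hvdelta) _; rewrite vnormZ.
have -> : eps / (vnorm v + 1) * (Rabs h * vnorm v)
  = eps * Rabs h * (vnorm v / (vnorm v + 1)) by field; lra.
have := div_add1_le1 v0; have : 0 <= eps * Rabs h by nra.
by nra.
Qed.

Lemma has_gradient_line (f : vec d -> R) g : has_gradient f g -> line_gradient f g.
Proof.
move=> fg w v s; apply: (line_deriv_of_remainder (dphi := fun z h => dot (g z) h)) => // z t.
exact: dotZr.
Qed.

Lemma has_jacobian_line (g : vec d -> vec d) H : has_jacobian g H -> line_jacobian g H.
Proof.
move=> gH u w v s; apply: (line_deriv_of_remainder (phi := fun z => dot u (g z))
  (dphi := fun z h => dot u (mv (H z) h))) => [z eps eps0|z t]; last by rewrite mvZ dotZr.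
have u0 := vnorm_ge0 u.
have [delta [delta0 gh]] := gH z (eps / (vnorm u + 1)) ltac:(apply: Rdiv_lt_0_compat; lra).
exists delta; split => // h hdelta.
rewrite -!dotBr; apply: Rle_trans (cauchy_schwarz _ _) _.
apply: Rle_trans (Rmult_le_compat_l _ _ _ u0 (gh h hdelta)) _.
have -> : vnorm u * (eps / (vnorm u + 1) * vnorm h)
  = eps * vnorm h * (vnorm u / (vnorm u + 1)) by field; lra.
have := div_add1_le1 u0; have : 0 <= eps * vnorm h by have := vnorm_ge0 h; nra.
by nra.
Qed.

End Lines.

Definition basisv d (a : 'I_d) : vec d := fun k => if k == a then 1 else 0.
Definition plane d (w : vec d) a b s t := line (line w (basisv a) s) (basisv b) t.

Section HessianSymmetry.
Variable d : nat.
Implicit Types (w : vec d) (a b : 'I_d).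

Lemma dot_basisv (v : vec d) a : dot v (basisv a) = v a.
Proof. exact: rsum_delta. Qed.

Lemma mv_basisv (A : mat d) a b : mv A (basisv b) a = A a b.
Proof. exact: rsum_delta. Qed.

Lemma vnorm_basisv a : vnorm (basisv a) = 1.
Proof. by rewrite /vnorm dot_basisv /basisv eqxx sqrt_1. Qed.

Lemma plane_swap w a b s t : plane w a b s t = plane w b a t s.
Proof. by apply: functional_extensionality => i; rewrite /plane /line /vadd /scal; ring. Qed.

Lemma vnorm_plane w a b s t : 0 <= s -> 0 <= t -> vnorm (vsub (plane w a b s t) w) <= s + t.
Proof.
move=> s0 t0; have -> : vsub (plane w a b s t) w = vadd (scal s (basisv a)) (scal t (basisv b)).
  by apply: functional_extensionality => i; rewrite /plane /line /vsub /vadd /scal; ring.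
by apply: Rle_trans (vnormD _ _) _; rewrite !vnormZ !vnorm_basisv !Rabs_right; lra.
Qed.

Definition mixed_diff (f : vec d -> R) w a b del :=
  f (plane w a b del del) - f (plane w a b del 0) - f (plane w a b 0 del) + f (plane w a b 0 0).

Lemma mixed_diffC f w a b del : mixed_diff f w a b del = mixed_diff f w b a del.
Proof. by rewrite /mixed_diff !(plane_swap w a b); ring. Qed.

(* Two applications of the mean value theorem, first in the direction a, then in b. *)
Lemma mixed_diff_mvt f g H w a b del : is_C2 f g H -> 0 < del ->
  exists xi eta, 0 < xi < del /\ 0 < eta < del /\
    mixed_diff f w a b del = del * del * H (plane w a b xi eta) a b.
Proof.
move=> [fg [gH _]] del0.
pose phi s := f (plane w b a del s) - f (plane w b a 0 s).
pose phi' s := dot (g (plane w b a del s)) (basisv a) - dot (g (plane w b a 0 s)) (basisv a).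
have phi_deriv c : 0 <= c <= del -> derivable_pt_lim phi c (phi' c).
  move=> _; apply: (derivable_pt_lim_minus (fun s => f (plane w b a del s))
    (fun s => f (plane w b a 0 s))); exact: has_gradient_line fg _ _ _.
have [xi [phi_incr xi_del]] := MVT_cor2 phi phi' 0 del del0 phi_deriv.
pose chi t := dot (basisv a) (g (plane w a b xi t)).
pose chi' t := H (plane w a b xi t) a b.
have chi_deriv c : 0 <= c <= del -> derivable_pt_lim chi c (chi' c).
  by move=> _; rewrite /chi' -mv_basisv -dot_basisv dotC; exact: has_jacobian_line gH _ _ _ _.
have [eta [chi_incr eta_del]] := MVT_cor2 chi chi' 0 del del0 chi_deriv.
exists xi, eta; do 2!split; try lra.
have -> : mixed_diff f w a b del = phi del - phi 0.
  by rewrite mixed_diffC /mixed_diff /phi; ring.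
rewrite phi_incr.
have -> : phi' xi = chi del - chi 0.
  by rewrite /phi' /chi !(dotC (basisv a)) !(plane_swap w b a).
by rewrite chi_incr /chi'; ring.
Qed.

(* Schwarz: both mixed second differences are del^2 times a value of H near w,
   and H is continuous. *)
Lemma is_C2_hessian_sym f g H w : is_C2 f g H -> msym (H w).
Proof.
move=> fC2 a b; apply: Rminus_diag_uniq.
case: (Req_dec (H w a b - H w b a) 0) => // Hab; exfalso.
set eps := Rabs (H w a b - H w b a); have eps0 : 0 < eps by apply: Rabs_pos_lt.
have [delta [delta0 Hcont]] := proj2 (proj2 fC2) w (eps / 2) ltac:(lra).
set del := delta / 3; have del0 : 0 < del by rewrite /del; lra.
have [x1 [y1 [x1del [y1del E1]]]] := mixed_diff_mvt w a b fC2 del0.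
have [x2 [y2 [x2del [y2del E2]]]] := mixed_diff_mvt w b a fC2 del0.
have Heq : H (plane w a b x1 y1) a b = H (plane w b a x2 y2) b a.
  apply: (Rmult_eq_reg_l (del * del)); last by nra.
  by rewrite -E1 -E2 mixed_diffC.
have near1 := vnorm_plane w a b (Rlt_le _ _ (proj1 x1del)) (Rlt_le _ _ (proj1 y1del)).
have near2 := vnorm_plane w b a (Rlt_le _ _ (proj1 x2del)) (Rlt_le _ _ (proj1 y2del)).
have := Hcont (plane w a b x1 y1) ltac:(rewrite /del in x1del y1del; lra) a b.
have := Hcont (plane w b a x2 y2) ltac:(rewrite /del in x2del y2del; lra) b a.
rewrite Heq => C2 C1; have := Rabs_triang (H w a b - H (plane w b a x2 y2) b a)
  (H (plane w b a x2 y2) b a - H w b a).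
have -> : H w a b - H (plane w b a x2 y2) b a + (H (plane w b a x2 y2) b a - H w b a)
  = H w a b - H w b a by ring.
by rewrite Rabs_minus_sym in C1; rewrite -/eps; lra.
Qed.

End HessianSymmetry.

Section FiniteSumDerivatives.
Variables (N d : nat) (F : 'I_N -> vec d -> R) (gF : 'I_N -> vec d -> vec d)
  (HF : 'I_N -> vec d -> mat d).

Lemma line_gradient_avg : (forall i, line_gradient (F i) (gF i)) ->
  line_gradient (Robj F) (gradR gF).
Proof.
move=> Fg w v s; rewrite /gradR dotC dot_avg /Robj /avgN.
apply: derivable_pt_lim_scal.
apply: (derivable_pt_lim_rsum (f := fun i t => F i (line w v t))
  (l := fun i => dot v (gF i (line w v s)))) => i.
by rewrite dotC; exact: Fg.
Qed.

Lemma line_jacobian_avg : (forall i, line_jacobian (gF i) (HF i)) ->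
  line_jacobian (gradR gF) (hessR HF).
Proof.
move=> gH u w v s; rewrite /hessR mv_avg dot_avg /avgN.
apply: (derivable_pt_lim_ext (fun t => avgN (fun i => dot u (gF i (line w v t))))) => [t|].
  by rewrite /gradR dot_avg.
apply: derivable_pt_lim_scal.
apply: (derivable_pt_lim_rsum (f := fun i t => dot u (gF i (line w v t)))
  (l := fun i => dot u (mv (HF i (line w v s)) v))) => i.
exact: gH.
Qed.

End FiniteSumDerivatives.

Lemma line_gradient_min_eq0 d (f : vec d -> R) g wstar : line_gradient f g ->
  (forall w, f wstar <= f w) -> g wstar = vzero.
Proof.
move=> fg fmin; apply: dot_eq0; set v := g wstar.
have := fg wstar v 0; rewrite line0 => /derivable_pt_lim_min_eq0; apply => y.
by rewrite line0; exact: fmin.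
Qed.

Section SegmentBounds.
Variables (d : nat) (g : vec d -> vec d) (H : vec d -> mat d).
Hypothesis gH : line_jacobian g H.
Implicit Types w z : vec d.

Lemma line_jacobian_increment u w z :
  dot u (g (line z (vsub w z) 1)) - dot u (g (line z (vsub w z) 0)) = dot u (vsub (g w) (g z)).
Proof. by rewrite line0 line1 dotBr. Qed.

Lemma line_jacobian_lipschitz L : 0 <= L ->
  (forall x y, vnorm (mv (H x) y) <= L * vnorm y) ->
  forall w z, vnorm (vsub (g w) (g z)) <= L * vnorm (vsub w z).
Proof.
move=> L0 HleL w z; set u := vsub (g w) (g z); set e := vsub w z.
apply: vnorm_le_of_dot; first by have := vnorm_ge0 e; nra.
rewrite -(line_jacobian_increment u w z).
apply: (increment_le_of_deriv (fun c _ => gH u z e c)) => c _.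
apply: Rle_trans (dot_le_vnorm _ _) _.
by apply: Rmult_le_compat_l; [exact: vnorm_ge0 | exact: HleL].
Qed.

Lemma line_jacobian_monotone mu :
  (forall x y, mu * dot y y <= dot y (mv (H x) y)) ->
  forall w z, mu * dot (vsub w z) (vsub w z) <= dot (vsub w z) (vsub (g w) (g z)).
Proof.
move=> muleH w z; rewrite -line_jacobian_increment.
exact: (increment_ge_of_deriv (fun c _ => gH _ z _ c)).
Qed.

(* The correction K/2 (1 - t)^2 makes the increment function nonincreasing on [0, 1];
   this is what yields the constant M/2 rather than M. *)
Lemma line_jacobian_taylor M :
  (forall x y, opnorm_le (msub (H x) (H y)) (M * vnorm (vsub x y))) ->
  forall w z, vnorm (vsub (vsub (g w) (g z)) (mv (H w) (vsub w z)))
    <= M / 2 * (vnorm (vsub w z) * vnorm (vsub w z)).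
Proof.
move=> Hlip w z; set e := vsub w z; set u := vsub (vsub (g w) (g z)) (mv (H w) e).
set K := vnorm u * M * (vnorm e * vnorm e); set q := dot u (mv (H w) e).
have Me0 : 0 <= M * (vnorm e * vnorm e).
  have := Hlip w z e; rewrite -/e; have := vnorm_ge0 (mv (msub (H w) (H z)) e).
  by nra.
have sq_deriv c : derivable_pt_lim (fun t => (1 - t) * (1 - t)) c (- 2 * (1 - c)).
  have lin : derivable_pt_lim (fun t => 1 - t) c (0 - 1).
    exact: derivable_pt_lim_minus (derivable_pt_lim_const 1 c) (derivable_pt_lim_id c).
  have := derivable_pt_lim_mult _ _ _ _ _ lin lin; rewrite /mult_fct.
  by congr derivable_pt_lim; ring.
pose f t := dot u (g (line z e t)) - q * t + K / 2 * ((1 - t) * (1 - t)).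
pose f' c := dot u (mv (H (line z e c)) e) - q + K / 2 * (- 2 * (1 - c)).
have f_deriv c : 0 <= c <= 1 -> derivable_pt_lim f c (f' c).
  move=> _; apply: derivable_pt_lim_plus; last exact: derivable_pt_lim_scal.
  apply: derivable_pt_lim_minus; first exact: gH.
  by have := derivable_pt_lim_scal _ q c _ (derivable_pt_lim_id c); rewrite Rmult_1_r.
have f'_le0 c : 0 <= c <= 1 -> f' c <= 0.
  move=> c01; have Hc := Hlip (line z e c) w e.
  rewrite line_vsub -/e vnormZ Rabs_left1 in Hc; last lra.
  have := dot_le_vnorm u (mv (msub (H (line z e c)) (H w)) e).
  rewrite [in dot _ _]mv_msub dotBr -/q.
  have : vnorm u * vnorm (mv (msub (H (line z e c)) (H w)) e) <= K * (1 - c).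
    by apply: Rle_trans (Rmult_le_compat_l _ _ _ (vnorm_ge0 u) Hc) _; rewrite /K; right; ring.
  by rewrite /f'; lra.
have := increment_le_of_deriv f_deriv f'_le0.
rewrite /f line0 /e line1 -/e => incr.
apply: vnorm_le_of_dot; first lra.
have : dot u u = dot u (g w) - dot u (g z) - q by rewrite {2}/u !dotBr.
by rewrite /K in incr; lra.
Qed.

End SegmentBounds.

Lemma avgN_const N c : (0 < N)%nat -> avgN (fun _ : 'I_N => c) = c.
Proof.
move=> N0; have : 0 < INR N by apply: lt_0_INR; apply/ltP.
by rewrite /avgN rsum_const => ?; field; lra.
Qed.

Section SampleExpectation.
Variables (N b : nat).
Hypothesis N0 : (0 < N)%nat.
Implicit Types X Y : b.-tuple 'I_N -> R.

Lemma INR_pow_gt0 : 0 < INR N ^ b.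
Proof. by apply: pow_lt; apply: lt_0_INR; apply/ltP. Qed.

Lemma sample_exp_ext X Y : (forall S, X S = Y S) -> sample_exp X = sample_exp Y.
Proof. by move=> XY; rewrite /sample_exp (eq_bigr _ (fun S _ => XY S)). Qed.

Lemma sample_expD X Y : sample_exp (fun S => X S + Y S) = sample_exp X + sample_exp Y.
Proof.
rewrite /sample_exp; have -> : \big[Rplus/0]_S (X S + Y S)
  = \big[Rplus/0]_S X S + \big[Rplus/0]_S Y S by exact: big_split.
exact: Rmult_plus_distr_l.
Qed.

Lemma sample_expZ c X : sample_exp (fun S => c * X S) = c * sample_exp X.
Proof.
rewrite /sample_exp; have -> : \big[Rplus/0]_S (c * X S) = c * \big[Rplus/0]_S X S.
  by rewrite -mulr_sumr.
by rewrite -!Rmult_assoc (Rmult_comm c).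
Qed.

Lemma sample_exp_le X Y : (forall S, X S <= Y S) -> sample_exp X <= sample_exp Y.
Proof.
move=> XY; apply: Rmult_le_compat_l; first by apply/Rlt_le/Rinv_0_lt_compat/INR_pow_gt0.
by apply/RleP; apply: ler_sum => S _; apply/RleP.
Qed.

Lemma sample_exp_rsum n (X : 'I_n -> b.-tuple 'I_N -> R) :
  sample_exp (fun S => rsum (fun a => X a S)) = rsum (fun a => sample_exp (X a)).
Proof. by rewrite /sample_exp exchange_big -rsumZ. Qed.

(* The coordinates of a uniform sample S are independent and uniform. *)
Lemma sample_exp_prod (G : 'I_b -> 'I_N -> R) :
  sample_exp (fun S => \big[Rmult/1]_(j < b) G j (tnth S j)) = \big[Rmult/1]_(j < b) avgN (G j).
Proof.
have tuple_ffun : bijective (fun f : {ffun 'I_b -> 'I_N} => [tuple f i | i < b]).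
  exists (fun S => [ffun i => tnth S i]) => [f|S].
    by apply/ffunP => i; rewrite ffunE tnth_mktuple.
  by apply: eq_from_tnth => i; rewrite tnth_mktuple ffunE.
rewrite /sample_exp (reindex _ (onW_bij _ tuple_ffun)) /=.
under eq_bigr => f _ do under eq_bigr => j _ do rewrite tnth_mktuple.
rewrite -(bigA_distr_bigA (fun j x => G j x)) /avgN big_split /=; congr (_ * _).
by rewrite big_const_ord -pow_inv; elim: b => [|m IH] //=; rewrite IH.
Qed.

Lemma sample_exp_const c : sample_exp (fun _ : b.-tuple 'I_N => c) = c.
Proof.
have := sample_exp_prod (fun _ _ => 1); rewrite !big1 // => [one|j _]; last exact: avgN_const.
by rewrite -(Rmult_1_r c) sample_expZ one.
Qed.

Lemma sample_exp_tnth (h : 'I_N -> R) (j : 'I_b) :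
  sample_exp (fun S => h (tnth S j)) = avgN h.
Proof.
have := sample_exp_prod (fun i => if i == j then h else fun _ => 1).
rewrite (bigD1 j) //= eqxx big1 => [|i /negbTE ->]; last exact: avgN_const.
rewrite Rmult_1_r => <-; apply: sample_exp_ext => S.
by rewrite (bigD1 j) //= eqxx big1 ?Rmult_1_r // => i /negbTE ->.
Qed.

Lemma sample_exp_tnth_pair (f g : 'I_N -> R) (j l : 'I_b) : j != l ->
  sample_exp (fun S => f (tnth S j) * g (tnth S l)) = avgN f * avgN g.
Proof.
move=> jl; have lj : (l == j) = false by apply/negbTE; rewrite eq_sym.
have := sample_exp_prod (fun i => if i == j then f else if i == l then g else fun _ => 1).
rewrite (bigD1 j) //= eqxx (bigD1 l) ?lj //= eqxx big1 => [|i /andP [/negbTE -> /negbTE ->]];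
  last exact: avgN_const.
rewrite Rmult_1_r -Rmult_assoc => <-; apply: sample_exp_ext => S.
rewrite (bigD1 j) //= eqxx (bigD1 l) ?lj //= eqxx big1 ?Rmult_1_r //.
by move=> i /andP [/negbTE -> /negbTE ->].
Qed.

Lemma sample_exp_le_sqrt X : sample_exp X <= sqrt (sample_exp (fun S => X S * X S)).
Proof.
set m := sample_exp X.
have var_ge0 : 0 <= sample_exp (fun S => (X S - m) * (X S - m)).
  by rewrite -(sample_exp_const 0); apply: sample_exp_le => S; apply: Rle_0_sqr.
have : sample_exp (fun S => (X S - m) * (X S - m))
    = sample_exp (fun S => X S * X S) + -2 * m * sample_exp X + m * m.
  rewrite -sample_expZ -(sample_exp_const (m * m)) -!sample_expD.
  by apply: sample_exp_ext => S; ring.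
rewrite -/m => var_eq; apply: Rle_trans (Rle_abs m) _.
by rewrite -sqrt_Rsqr_abs; apply: sqrt_le_1_alt; rewrite /Rsqr; lra.
Qed.

End SampleExpectation.

Definition sample_mean d N b (Y : 'I_N -> vec d) (S : b.-tuple 'I_N) : vec d :=
  fun a => / INR b * rsum (fun j => Y (tnth S j) a).

Section SampleMean.
Variables (N d b : nat) (Y : 'I_N -> vec d).
Hypotheses (N0 : (0 < N)%nat) (b0 : (0 < b)%nat).
Hypothesis Y_centered : forall a, avgN (fun i => Y i a) = 0.

Lemma sample_exp_cross a (j l : 'I_b) :
  sample_exp (fun S => Y (tnth S j) a * Y (tnth S l) a)
  = avgN (fun i => Y i a * Y i a) * (if l == j then 1 else 0).
Proof.
case: eqVneq => [-> | lj]; first by rewrite Rmult_1_r (sample_exp_tnth N0 (fun i => Y i a * Y i a)).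
rewrite Rmult_0_r (sample_exp_tnth_pair N0 (fun i => Y i a) (fun i => Y i a)).
  by rewrite Y_centered Rmult_0_r.
by rewrite eq_sym.
Qed.

Lemma sample_mean_sqr_exp :
  sample_exp (fun S : b.-tuple 'I_N => dot (sample_mean Y S) (sample_mean Y S))
  = / INR b * avgN (fun i => dot (Y i) (Y i)).
Proof.
have b_gt0 : 0 < INR b by apply: lt_0_INR; apply/ltP.
have N_gt0 : 0 < INR N by apply: lt_0_INR; apply/ltP.
have -> : (fun S : b.-tuple 'I_N => dot (sample_mean Y S) (sample_mean Y S))
    = fun S => rsum (fun a =>
    rsum (fun j => rsum (fun l => / INR b * / INR b * (Y (tnth S j) a * Y (tnth S l) a)))).
  apply: functional_extensionality => S; apply: rsum_ext => a.
  rewrite /sample_mean -rsumZ -rsumZr; apply: rsum_ext => j.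
  by rewrite -!rsumZ; apply: rsum_ext => l; ring.
rewrite sample_exp_rsum /avgN /dot rsum_exchange -!rsumZ; apply: rsum_ext => a.
rewrite sample_exp_rsum.
under rsum_ext => j do rewrite sample_exp_rsum.
under rsum_ext => j do under rsum_ext => l do rewrite sample_expZ sample_exp_cross -Rmult_assoc.
under rsum_ext => j do rewrite rsum_delta.
by rewrite rsum_const /avgN; field; split; lra.
Qed.

End SampleMean.

Section SubsampledHessian.
Variables (N d b : nat) (HF : 'I_N -> vec d -> mat d) (w e : vec d) (sigma : R).
Hypotheses (N0 : (0 < N)%nat) (b0 : (0 < b)%nat) (sigma0 : 0 <= sigma).
Hypothesis HF_sym : forall i, msym (HF i w).
Hypothesis var_le : opnorm_le (hess_var HF w) (sigma ^ 2).

Let dev i := msub (HF i w) (hessR HF w).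

Lemma subsampled_hessian_sample_mean (S : b.-tuple 'I_N) :
  vsub (mv (hessS HF S w) e) (mv (hessR HF w) e) = sample_mean (fun i => mv (dev i) e) S.
Proof.
have b_gt0 : 0 < INR b by apply: lt_0_INR; apply/ltP.
apply: functional_extensionality => a.
rewrite /hessS (mv_wsum (/ INR b) (fun j => HF (tnth S j) w)) /sample_mean /vsub /dev.
under [in RHS]rsum_ext => j do rewrite mv_msub /vsub.
by rewrite rsumB rsum_const; field; lra.
Qed.

Lemma hessian_dev_centered a : avgN (fun i => mv (dev i) e a) = 0.
Proof.
have N_gt0 : 0 < INR N by apply: lt_0_INR; apply/ltP.
rewrite /avgN /dev; under rsum_ext => i do rewrite mv_msub /vsub.
have -> : mv (hessR HF w) e a = avgN (fun i => mv (HF i w) e a) by rewrite /hessR mv_avg.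
by rewrite rsumB rsum_const /avgN; field; lra.
Qed.

Lemma hessian_dev_var :
  avgN (fun i => dot (mv (dev i) e) (mv (dev i) e)) <= sigma ^ 2 * (vnorm e * vnorm e).
Proof.
have dev_sym i : msym (dev i) by apply: msymB => //; apply: msym_avg.
have -> : avgN (fun i => dot (mv (dev i) e) (mv (dev i) e))
    = avgN (fun i => dot e (mv (mmul (dev i) (dev i)) e)).
  by rewrite /avgN; congr (_ * _); apply: rsum_ext => i; rewrite mv_mmul dot_mv_sym.
rewrite -dot_avg -mv_avg; apply: Rle_trans (dot_le_vnorm _ _) _.
change (vnorm e * vnorm (mv (hess_var HF w) e) <= sigma ^ 2 * (vnorm e * vnorm e)).
by have := var_le e; have := vnorm_ge0 e; nra.
Qed.

Lemma subsampled_hessian_error :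
  sample_exp (fun S : b.-tuple 'I_N => vnorm (vsub (mv (hessS HF S w) e) (mv (hessR HF w) e)))
  <= sigma / sqrt (INR b) * vnorm e.
Proof.
have b_gt0 : 0 < INR b by apply: lt_0_INR; apply/ltP.
have sqrtb_gt0 : 0 < sqrt (INR b) by apply: sqrt_lt_R0.
apply: Rle_trans (sample_exp_le_sqrt N0 _) _.
under sample_exp_ext => S do rewrite vnorm_sqr subsampled_hessian_sample_mean.
rewrite sample_mean_sqr_exp //; last exact: hessian_dev_centered.
apply: Rle_trans (sqrt_le_1_alt _ (/ INR b * (sigma ^ 2 * (vnorm e * vnorm e))) _) _.
  by apply: Rmult_le_compat_l; [apply/Rlt_le/Rinv_0_lt_compat | exact: hessian_dev_var].
have sqrtb := sqrt_sqrt (INR b) (Rlt_le _ _ b_gt0).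
have -> : / INR b * (sigma ^ 2 * (vnorm e * vnorm e))
    = (sigma / sqrt (INR b) * vnorm e) * (sigma / sqrt (INR b) * vnorm e).
  by rewrite -[in LHS]sqrtb; field; lra.
rewrite sqrt_square; first exact: Rle_refl.
by apply: Rmult_le_pos; [apply: Rmult_le_pos; [| apply/Rlt_le/Rinv_0_lt_compat] | exact: vnorm_ge0].
Qed.

End SubsampledHessian.

Lemma newton_error_le d (A H : mat d) m (g e p : vec d) :
  (forall x, m * dot x x <= dot x (mv A x)) ->
  m * vnorm (vadd e p)
  <= vnorm (vsub (mv A e) (mv H e)) + vnorm (vsub (mv H e) g) + vnorm (vadd (mv A p) g).
Proof.
move=> mleA; apply: Rle_trans (loewner_lower_vnorm (vadd e p) mleA) _.
have -> : mv A (vadd e p)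
    = vadd (vadd (vsub (mv A e) (mv H e)) (vsub (mv H e) g)) (vadd (mv A p) g).
  by rewrite mvD; apply: functional_extensionality => i; rewrite /vadd /vsub; ring.
apply: Rle_trans (vnormD _ _) _.
by have := vnormD (vsub (mv A e) (mv H e)) (vsub (mv H e) g); lra.
Qed.

(* For zeta < 0 the residual condition forces a zero gradient, hence n = 0 by
   strong monotonicity. *)
Lemma forcing_residual_le r G n zeta L mu : 0 <= r -> 0 <= G -> 0 <= n -> 0 < mu ->
  r <= zeta * G -> G <= L * n -> mu * (n * n) <= n * G -> r <= zeta * L * n.
Proof.
move=> r0 G0 n0 mu0 rG Gn nG; case: (Rle_lt_dec 0 zeta) => [zeta0 | zeta_lt0].
  by have := Rmult_le_compat_l _ _ _ zeta0 Gn; lra.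
have G_eq0 : G = 0 by nra.
have nn : n * n <= 0.
  by apply: (Rmult_le_reg_l mu) => //; rewrite G_eq0 in nG; lra.
have n_eq0 : n = 0 by nra.
by rewrite n_eq0 Rmult_0_r; nra.
Qed.

Section ExpectedStep.
Variables (N d b : nat) (F : 'I_N -> vec d -> R) (gF : 'I_N -> vec d -> vec d)
  (HF : 'I_N -> vec d -> mat d) (wstar : vec d) (mub mu L M sigma zeta : R).
Hypotheses (N0 : (0 < N)%nat) (b0 : (0 < b)%nat).
Hypothesis HC2 : forall i, is_C2 (F i) (gF i) (HF i).
Hypothesis wstar_min : forall w, Robj F wstar <= Robj F w.
Hypotheses (mub0 : 0 < mub) (mu0 : 0 < mu) (L0 : 0 <= L) (sigma0 : 0 <= sigma).
Hypothesis hessS_lower :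
  forall (S : b.-tuple 'I_N) w x, mub * dot x x <= dot x (mv (hessS HF S w) x).
Hypothesis hessR_bounds : forall w, loewner_between mu L (hessR HF w).
Hypothesis hessR_lip :
  forall w z, opnorm_le (msub (hessR HF w) (hessR HF z)) (M * vnorm (vsub w z)).
Hypothesis hess_var_le : forall w, opnorm_le (hess_var HF w) (sigma ^ 2).

Lemma gradR_line_jacobian : line_jacobian (gradR gF) (hessR HF).
Proof. by apply: line_jacobian_avg => i; apply: has_jacobian_line; case: (HC2 i) => _ []. Qed.

Lemma gradR_wstar : gradR gF wstar = vzero.
Proof.
apply: (line_gradient_min_eq0 (f := Robj F)) => //; apply: line_gradient_avg => i.
by apply: has_gradient_line; case: (HC2 i).
Qed.

Let e w := vsub w wstar.

Lemma gradR_vnorm_le w : vnorm (gradR gF w) <= L * vnorm (e w).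
Proof.
rewrite -(vsub0 (gradR gF w)) -gradR_wstar.
apply: (line_jacobian_lipschitz gradR_line_jacobian L0) => x y.
apply: psd_opnorm_le => // [|z|z]; last by have := hessR_bounds x z; lra.
  exact: msym_avg (fun i => is_C2_hessian_sym x (HC2 i)).
by have := hessR_bounds x z; have := dot_ge0 z; nra.
Qed.

Lemma gradR_taylor w :
  vnorm (vsub (mv (hessR HF w) (e w)) (gradR gF w)) <= M / 2 * (vnorm (e w) * vnorm (e w)).
Proof.
rewrite vnorm_vsubC -(vsub0 (gradR gF w)) -gradR_wstar.
exact: (line_jacobian_taylor gradR_line_jacobian hessR_lip).
Qed.

Lemma gradR_monotone w : mu * dot (e w) (e w) <= dot (e w) (gradR gF w).
Proof.
rewrite -(vsub0 (gradR gF w)) -gradR_wstar.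
by apply: (line_jacobian_monotone gradR_line_jacobian) => x y; have := hessR_bounds x y; lra.
Qed.

Lemma expected_step_bound w (p : b.-tuple 'I_N -> vec d) :
  (forall S, vnorm (vadd (mv (hessS HF S w) (p S)) (gradR gF w)) <= zeta * vnorm (gradR gF w)) ->
  sample_exp (fun S => vnorm (vsub (vadd w (p S)) wstar))
  <= M / (2 * mub) * vnorm (e w) ^ 2
     + (sigma / (mub * sqrt (INR b)) + L * zeta / mub) * vnorm (e w).
Proof.
move=> residual; set ne := vnorm (e w); set He := mv (hessR HF w) (e w).
have ne0 : 0 <= ne := vnorm_ge0 _.
have step S : vnorm (vsub (vadd w (p S)) wstar)
    <= / mub * (vnorm (vsub (mv (hessS HF S w) (e w)) He) + (M / 2 * (ne * ne) + zeta * L * ne)).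
  have -> : vsub (vadd w (p S)) wstar = vadd (e w) (p S).
    by apply: functional_extensionality => i; rewrite /e /vsub /vadd; ring.
  have := @newton_error_le d _ (hessR HF w) _ (gradR gF w) (e w) (p S) (hessS_lower S w).
  have := gradR_taylor w; rewrite -/He -/ne => taylor.
  have : vnorm (vadd (mv (hessS HF S w) (p S)) (gradR gF w)) <= zeta * L * ne.
    apply: (forcing_residual_le (mu := mu)) (residual S) (gradR_vnorm_le w) _ => //;
      try exact: vnorm_ge0.
    by rewrite vnorm_sqr; apply: Rle_trans (gradR_monotone w) (dot_le_vnorm _ _).
  move=> res err; apply: (Rmult_le_reg_l mub) => //.
  by rewrite -Rmult_assoc Rinv_r; lra.
apply: Rle_trans (sample_exp_le N0 step) _.
rewrite sample_expZ sample_expD (@sample_exp_const _ _ N0).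
have := subsampled_hessian_error (e w) N0 b0 sigma0
  (fun i => is_C2_hessian_sym w (HC2 i)) (hess_var_le w).
rewrite -/He -/ne => hess_err.
apply: Rle_trans (Rmult_le_compat_l _ _ _ (Rlt_le _ _ (Rinv_0_lt_compat _ mub0))
  (Rplus_le_compat_r _ _ _ hess_err)) _.
have : 0 < sqrt (INR b) by apply/sqrt_lt_R0/lt_0_INR/ltP.
by move=> sqrtb; right; field; lra.
Qed.

End ExpectedStep.

Section FullExpectation.
Variables (N b : nat).
Hypothesis N0 : (0 < N)%nat.
Implicit Types X Y : seq (b.-tuple 'I_N) -> R.

Lemma full_exp_le k X Y : (forall h, X h <= Y h) -> full_exp k X <= full_exp k Y.
Proof.
elim: k X Y => [|k IH] X Y XY //=; apply: IH => h.
by apply: sample_exp_le => // S; exact: XY.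
Qed.

Lemma full_exp_ext k X Y : (forall h, X h = Y h) -> full_exp k X = full_exp k Y.
Proof.
by move=> XY; apply: Rle_antisym; apply: full_exp_le => h; rewrite XY; apply: Rle_refl.
Qed.

Lemma full_expD k X Y : full_exp k (fun h => X h + Y h) = full_exp k X + full_exp k Y.
Proof.
by elim: k X Y => [|k IH] X Y //=; rewrite -IH; apply: full_exp_ext => h; exact: sample_expD.
Qed.

Lemma full_expZ k c X : full_exp k (fun h => c * X h) = c * full_exp k X.
Proof.
by elim: k X => [|k IH] X //=; rewrite -IH; apply: full_exp_ext => h; exact: sample_expZ.
Qed.

Lemma full_exp_ge0 k X : (forall h, 0 <= X h) -> 0 <= full_exp k X.
Proof.
move=> X0; rewrite -(Rmult_0_l (full_exp k X)) -full_expZ.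
by apply: full_exp_le => h; have := X0 h; lra.
Qed.

End FullExpectation.

(* While e k <= e 0, the recursion gives e (k + 1) <= (C1 gamma e 0 + C2) e k <= e k / 2,
   so e never leaves [0, e 0]. *)
Lemma halving_of_quadratic_recursion (e q : nat -> R) C1 C2 gamma :
  0 < gamma -> C2 <= / 4 -> 4 * gamma * C1 * e 0%nat <= 1 ->
  (forall k, 0 <= e k) -> (forall k, 0 <= q k) -> (forall k, q k <= gamma * e k ^ 2) ->
  (forall k, e k.+1 <= C1 * q k + C2 * e k) -> forall k, e k.+1 <= / 2 * e k.
Proof.
move=> gamma0 C2_le C1_le e0 q0 qe rec.
have halve k : e k <= e 0%nat -> e k.+1 <= / 2 * e k.
  move=> ek; have := rec k; have := e0 k; have := Rmult_le_compat_r _ _ _ (e0 k) C2_le.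
  case: (Rle_lt_dec 0 C1) => [C1_0 | C1_neg].
    have := Rmult_le_compat_l _ _ _ C1_0 (qe k).
    have : C1 * gamma * e k * e k <= / 4 * e k.
      apply: Rmult_le_compat_r => //; apply: Rle_trans (_ : C1 * gamma * e 0%nat <= _); last lra.
      by apply: Rmult_le_compat_l => //; nra.
    by nra.
  by have := q0 k; nra.
have bounded k : e k <= e 0%nat.
  elim: k => [|k IH]; [exact: Rle_refl | have := halve k IH; have := e0 k; lra].
by move=> k; exact: halve k (bounded k).
Qed.

Lemma step_coeff_le_quarter sigma L zeta mub mubar beta :
  0 <= sigma -> 0 < mubar -> mubar <= mub -> 0 < L -> 0 < beta ->
  64 * sigma ^ 2 / mubar ^ 2 <= beta -> zeta <= mub / (8 * L) ->
  sigma / (mub * sqrt beta) + L * zeta / mub <= / 4.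
Proof.
move=> sigma0 mubar0 mubar_le L0 beta0 beta_ge zeta_le.
have sqrtb0 : 0 < sqrt beta := sqrt_lt_R0 _ beta0.
have sqrtb2 := sqrt_sqrt beta (Rlt_le _ _ beta0).
have sigma_le : 8 * sigma <= sqrt beta * mubar.
  have : 64 * (sigma * sigma) <= beta * (mubar * mubar).
    have -> : 64 * (sigma * sigma) = 64 * sigma ^ 2 / mubar ^ 2 * (mubar * mubar) by field; lra.
    by apply: Rmult_le_compat_r => //; nra.
  have : sqrt beta * mubar * (sqrt beta * mubar) = beta * (mubar * mubar).
    by transitivity (sqrt beta * sqrt beta * (mubar * mubar)); [ring | rewrite sqrtb2].
  have : 0 <= sqrt beta * mubar by nra.
  by nra.
have : sigma / (mub * sqrt beta) <= / 8.
  by apply: (Rmult_le_reg_r (mub * sqrt beta)); [nra | rewrite /Rdiv Rmult_assoc Rinv_l; nra].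
have : L * zeta / mub <= / 8.
  apply: (Rmult_le_reg_r mub); first lra; rewrite /Rdiv Rmult_assoc Rinv_l; last lra.
  have -> : / 8 * mub = L * (mub / (8 * L)) by field; lra.
  by rewrite Rmult_1_r; apply: Rmult_le_compat_l => //; lra.
lra.
Qed.

Theorem mainTheorem7
  (N d beta : nat)
  (F : 'I_N -> vec d -> R) (gF : 'I_N -> vec d -> vec d)
  (HF : 'I_N -> vec d -> mat d)
  (mu_b L_b : nat -> R) (mubar Lbar mu L M sigma zeta : R) (wstar : vec d)
  (* finite sum, each F_i twice continuously differentiable *)
  (HN : (0 < N)%nat)
  (HC2 : forall i, is_C2 (F i) (gF i) (HF i))
  (* w* is the unique minimizer of R *)
  (Hmin : forall w, Robj F wstar <= Robj F w)
  (Huniq : forall w', (forall w, Robj F w' <= Robj F w) -> w' = wstar)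
  (* Assumption A1 *)
  (HA1b : forall b : nat, (0 < b)%nat ->
     0 < mu_b b <= L_b b /\
     forall (S : b.-tuple 'I_N) (w : vec d),
       loewner_between (mu_b b) (L_b b) (hessS HF S w))
  (HA1bar : 0 < mubar /\
     forall b : nat, (0 < b)%nat -> mubar <= mu_b b /\ L_b b <= Lbar)
  (HA1 : 0 < mu <= L /\ forall w, loewner_between mu L (hessR HF w))
  (* Assumption A3 *)
  (HA3 : forall w z, opnorm_le (msub (hessR HF w) (hessR HF z)) (M * vnorm (vsub w z)))
  (* Assumption A4 *)
  (Hsigma : 0 <= sigma)
  (HA4 : forall w, opnorm_le (hess_var HF w) (sigma ^ 2))
  (* sample size and forcing parameter *)
  (Hbeta : (0 < beta)%nat)
  (Hzeta : zeta < 1) :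
  (* one-step bound in conditional expectation *)
  (forall (w : vec d) (p : beta.-tuple 'I_N -> vec d),
     (forall S, vnorm (vadd (mv (hessS HF S w) (p S)) (gradR gF w))
                <= zeta * vnorm (gradR gF w)) ->
     sample_exp (fun S => vnorm (vsub (vadd w (p S)) wstar))
     <= M / (2 * mu_b beta) * vnorm (vsub w wstar) ^ 2
        + (sigma / (mu_b beta * sqrt (INR beta)) + L * zeta / mu_b beta)
          * vnorm (vsub w wstar))
  /\
  (* linear convergence in expectation under B1 *)
  (forall (w0 : vec d)
          (p : seq (beta.-tuple 'I_N) -> beta.-tuple 'I_N -> vec d)
          (gamma : R),
     (forall h S,
        vnorm (vadd (mv (hessS HF S (iterate w0 p h)) (p h S))
                    (gradR gF (iterate w0 p h)))
        <= zeta * vnorm (gradR gF (iterate w0 p h))) ->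
     0 < gamma ->
     (forall k : nat,
        full_exp k (fun h => vnorm (vsub (iterate w0 p h) wstar) ^ 2)
        <= gamma * (full_exp k (fun h => vnorm (vsub (iterate w0 p h) wstar))) ^ 2) ->
     64 * sigma ^ 2 / mubar ^ 2 <= INR beta ->
     zeta <= mu_b beta / (8 * L) ->
     4 * (M / (2 * mu_b beta)) * vnorm (vsub w0 wstar) <= 1 ->
     4 * gamma * (M / (2 * mu_b beta)) * vnorm (vsub w0 wstar) <= 1 ->
     forall k : nat,
       full_exp k.+1 (fun h => vnorm (vsub (iterate w0 p h) wstar))
       <= / 2 * full_exp k (fun h => vnorm (vsub (iterate w0 p h) wstar))).
Proof.
have [[mu0 muL] hessR_bounds] := HA1.
have [[mub0 _] hessS_bounds] := HA1b beta Hbeta.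
have one_step := expected_step_bound HN Hbeta HC2 Hmin mub0 mu0
  (Rlt_le _ _ (Rlt_le_trans _ _ _ mu0 muL)) Hsigma (fun S w x => proj1 (hessS_bounds S w x))
  hessR_bounds HA3 HA4.
split; first exact: one_step.
move=> w0 p gamma residual gamma0 B1 beta_ge zeta_le _ init.
apply: (halving_of_quadratic_recursion
  (q := fun k => full_exp k (fun h => vnorm (vsub (iterate w0 p h) wstar) ^ 2))
  (C2 := sigma / (mu_b beta * sqrt (INR beta)) + L * zeta / mu_b beta) gamma0 _ init).
- have [mubar0 mubar_le] := HA1bar.
  apply: step_coeff_le_quarter beta_ge zeta_le => //; last exact/lt_0_INR/ltP.
    exact: proj1 (mubar_le beta Hbeta).
  lra.
- by move=> k; apply: full_exp_ge0 => // h; exact: vnorm_ge0.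
- by move=> k; apply: full_exp_ge0 => // h; apply: pow_le; exact: vnorm_ge0.
- exact: B1.
- move=> k; rewrite [full_exp k.+1 _]/= -!(full_expZ HN) -(full_expD HN).
  by apply: full_exp_le => // h; exact: one_step (residual h).
Qed.
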